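(* Suppose UBEV-S (described in the context) is run on a contextual-bandit MDP $\mathcal M_C$, i.e. an episodic MDP whose transition probabilities satisfy $p(s'\mid s,a)=\mu(s')$ for all $s,a,s'$, for a fixed distribution $\mu$ over states. Then outside of the failure event, for every episode $k$ and timestep $t$, $$\mathrm{rng}\,\tilde V^{\pi_k}_t\le 1+\tilde O\!\left(\frac{H\sqrt S}{\sqrt{\min_{(s',t')}n_k(s',\pi_k(s',t'))}}\right).$$
   Context: Setting: a finite-horizon episodic MDP with finite state set $\mathcal S$ ($|\mathcal S|=S$), finite action set $\mathcal A$ ($|\mathcal A|=A$), horizon $H$, stationary transitions $p(s'\mid s,a)$ and mean rewards $r(s,a)\in[0,1]$ (observed rewards in $[0,1]$). Episodes $k=1,2,\dots$ each have $H$ steps. For a vector $V$, $\mathrm{rng}\,V=\max_sV(s)-\min_sV(s)$. $V^*_t$ denotes the optimal value function at timestep $t$. $\tilde O(\cdot)$ hides constants and factors polylogarithmic in quantities polynomial in $S,A,T,K,H,1/\delta$. Algorithm UBEV-S (input $\delta$): maintain, aggregated over all timesteps of all past episodes, counts $n(s,a)$, reward sums $l(s,a)$, transition counts $m(s',s,a)$ (initially $0$), and a scalar $\phi^+$ initialized to $0$ once. At the start of each episode, set $\tilde V_{H+1}\equiv0$ and for $t=H,\dots,1$ and each $s$: for each $a$, $\phi(s,a)=\sqrt{(2\ln\ln(\max\{e,n(s,a)\})+\ln(27HSA/\delta))/n(s,a)}$, $\hat r(s,a)=l(s,a)/n(s,a)$, $\hat p(s,a)=m(\cdot,s,a)/n(s,a)$,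 $Q(a)=\min\{1,\hat r+\phi\}+\min\{\max_{s'}\tilde V_{t+1}(s'),\hat p(s,a)^\top\tilde V_{t+1}+\min\{H-t,\mathrm{rng}\,\tilde V_{t+1}+\phi^+\}\phi(s,a)\}$; set $\pi_k(s,t)=\arg\max_aQ(a)$, $\tilde V_t(s)=Q(\pi_k(s,t))$, $\phi^+\leftarrow\max\{4\sqrt SH^2\phi(s,\pi_k(s,t)),\phi^+\}$. Then execute $\pi_k$ for $H$ steps and update the counts. In episode $k$: $n_k(s,a)$, $\hat r_k$, $\hat p_k$, $\phi_k$ are the quantities at the start of the episode and $\tilde V^{\pi_k}_t$ is the vector $\tilde V_t$ computed in episode $k$. Failure event: let $w_{tk}(s,a)$ be the probability, in episode $k$ under $\pi_k$, of being in $s$ at step $t$ and taking $a$. ''Outside of the failure event'' means that for all episodes $k$, timesteps $t$ and pairs $(s,a)$ the concentration inequalities used by the algorithm hold, in particular: $n_k(s,a)\ge\frac12\sum_{i<k}\sum_{t\in[H]}w_{ti}(s,a)-H\ln\frac{9SA}{\delta}$; $|\hat r_k(s,a)-r(s,a)|\le\phi_k(s,a)$; $|(\hat p_k(s,a)-p(\cdot\mid s,a))^\top V^*_{t+1}|\le(\mathrm{rng}\,V^*_{t+1})\phi_k(s,a)$; and $\|\hat p_k(s,a)-p(\cdot\mid s,a)\|_1\le4\sqrt S\,\phi_k(s,a)$ (so in particular $\|\hat p_k(s,a)-p(\cdot\mid s,a)\|_1=\tilde O(\sqrt{S/n_k(s,a)})$). *)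

From HB Require Import structures.
From mathcomp Require Import all_boot all_order all_algebra.
From mathcomp Require Import reals sequences exp.
Unset Printing Implicit Defensive.
Import Order.TTheory GRing.Theory Num.Theory.
Local Open Scope ring_scope.

(* States are 'I_S (processed in the natural order 0,...,S-1 during planning),
   actions are 'I_A, timesteps are natural numbers 1..H, episodes are 1,2,... *)

Definition vmax {R : realType} {T : finType} (f : T -> R) : R :=
  let l := [seq f x | x <- enum T] in foldr Num.max (head 0 l) l.
Definition vmin {R : realType} {T : finType} (f : T -> R) : R :=
  let l := [seq f x | x <- enum T] in foldr Num.min (head 0 l) l.
Definition rng {R : realType} {T : finType} (f : T -> R) : R := vmax f - vmin f.

Definition is_distr {R : realType} {T : finType} (f : T -> R) : Prop :=
  (forall x, 0 <= f x) /\ \sum_x f x = 1.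

Definition phi_val {R : realType} (S A H : nat) (delta : R) (n : nat) : R :=
  Num.sqrt ((2 * ln (ln (Num.max (expR 1) n%:R))
             + ln (27 * H%:R * S%:R * A%:R / delta)) / n%:R).

(* phi as an extended value: None stands for +infinity (the case n = 0) *)
Definition phi_of {R : realType} (S A H : nat) (delta : R) (n : nat) : option R :=
  if n == 0%N then None else Some (phi_val S A H delta n).

Definition phip_upd {R : realType} (S H : nat) (pp ph : option R) : option R :=
  match pp, ph with
  | Some p, Some x => Some (Num.max (4 * Num.sqrt S%:R * H%:R ^+ 2 * x) p)
  | _, _ => None
  end.

(* Q(a) at state s, timestep t, given counts n, reward sums l, transition
   counts m (m s' s a = m(s',s,a)), the next vector Vn = V~_{t+1} and the
   current value pp of phi+.  If n(s,a) = 0 then phi = +infinity and the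
   formula evaluates to 1 + max_s' V~_{t+1}(s'). *)
Definition Qval {R : realType} (S A H : nat) (delta : R)
  (n : 'I_S -> 'I_A -> nat) (l : 'I_S -> 'I_A -> R)
  (m : 'I_S -> 'I_S -> 'I_A -> nat) (Vn : 'I_S -> R) (t : nat)
  (pp : option R) (s : 'I_S) (a : 'I_A) : R :=
  match phi_of S A H delta (n s a) with
  | None => 1 + vmax Vn
  | Some ph =>
      let nn : R := (n s a)%:R in
      let coef := match pp with
                  | None => (H - t)%:R
                  | Some p => Num.min (H - t)%:R (rng Vn + p)
                  end in
      Num.min 1 (l s a / nn + ph)
      + Num.min (vmax Vn) (\sum_(s' : 'I_S) ((m s' s a)%:R / nn) * Vn s' + coef * ph)
  end.

(* Counts aggregated over all timesteps 1..H of episodes 1..k-1.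
   st i h = state at step h of episode i (h = 1..H+1, state H+1 is the last
   observed next state), rw i h = observed reward, action = pol i (st i h) h. *)
Definition cnt_n {S A : nat} (H : nat) (pol : nat -> 'I_S -> nat -> 'I_A)
  (st : nat -> nat -> 'I_S) (k : nat) (s : 'I_S) (a : 'I_A) : nat :=
  \sum_(1 <= i < k) \sum_(1 <= h < H.+1)
     ((st i h == s) && (pol i (st i h) h == a) : nat).

Definition cnt_l {R : realType} {S A : nat} (H : nat)
  (pol : nat -> 'I_S -> nat -> 'I_A) (st : nat -> nat -> 'I_S)
  (rw : nat -> nat -> R) (k : nat) (s : 'I_S) (a : 'I_A) : R :=
  \sum_(1 <= i < k) \sum_(1 <= h < H.+1)
     (if (st i h == s) && (pol i (st i h) h == a) then rw i h else 0).

Definition cnt_m {S A : nat} (H : nat) (pol : nat -> 'I_S -> nat -> 'I_A)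
  (st : nat -> nat -> 'I_S) (k : nat) (s' s : 'I_S) (a : 'I_A) : nat :=
  \sum_(1 <= i < k) \sum_(1 <= h < H.+1)
     ([&& st i h == s, pol i (st i h) h == a & st i h.+1 == s'] : nat).

Definition rhat {R : realType} {S A : nat} (H : nat) pol st (rw : nat -> nat -> R)
  k (s : 'I_S) (a : 'I_A) : R :=
  cnt_l H pol st rw k s a / (cnt_n H pol st k s a)%:R.
Definition phat {R : realType} {S A : nat} (H : nat) pol st
  k (s : 'I_S) (a : 'I_A) (s' : 'I_S) : R :=
  (cnt_m H pol st k s' s a)%:R / (cnt_n (A := A) H pol st k s a)%:R.

(* optimal value function: Wstar j = V*_{H+1-j}; V*_{H+1} = 0 *)
Fixpoint Wstar {R : realType} {S A : nat} (r : 'I_S -> 'I_A -> R)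
  (p : 'I_S -> 'I_A -> 'I_S -> R) (j : nat) : 'I_S -> R :=
  match j with
  | 0%N => fun _ => 0
  | j'.+1 => fun s => vmax (fun a : 'I_A =>
                r s a + \sum_(s' : 'I_S) p s a s' * Wstar r p j' s')
  end.
Definition Vstar {R : realType} {S A : nat} (H : nat) (r : 'I_S -> 'I_A -> R)
  (p : 'I_S -> 'I_A -> 'I_S -> R) (t : nat) : 'I_S -> R :=
  Wstar r p (H.+1 - t).

(* state occupancy: occ j s = P(s_{j+1} = s) under policy pol_i, initial
   distribution p0 *)
Fixpoint occ {R : realType} {S A : nat} (p0 : 'I_S -> R)
  (p : 'I_S -> 'I_A -> 'I_S -> R) (pol_i : 'I_S -> nat -> 'I_A) (j : nat)
  : 'I_S -> R :=
  match j with
  | 0%N => p0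
  | j'.+1 => fun s' => \sum_(s : 'I_S) occ p0 p pol_i j' s * p s (pol_i s j'.+1) s'
  end.
Definition wocc {R : realType} {S A : nat} (p0 : 'I_S -> R)
  (p : 'I_S -> 'I_A -> 'I_S -> R) (pol : nat -> 'I_S -> nat -> 'I_A)
  (i h : nat) (s : 'I_S) (a : 'I_A) : R :=
  occ p0 p (pol i) h.-1 s * (pol i s h == a)%:R.

(* A run of UBEV-S (with any argmax tie-breaking):
   pol k s t = pi_k(s,t), Vt k t = V~_t computed in episode k,
   phip k t s = value of phi+ just before state s at timestep t is processed
   in episode k (None = +infinity). *)
Definition ubevs_run {R : realType} (S A H : nat) (delta : R)
  (pol : nat -> 'I_S -> nat -> 'I_A) (Vt : nat -> nat -> 'I_S -> R)
  (phip : nat -> nat -> 'I_S -> option R)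
  (st : nat -> nat -> 'I_S) (rw : nat -> nat -> R) : Prop :=
  let upd k t s := phip_upd S H (phip k t s)
                     (phi_of S A H delta (cnt_n H pol st k s (pol k s t))) in
  (forall i h, 0 <= rw i h <= 1) /\
  (forall s0 : 'I_S, val s0 = 0%N -> phip 1%N H s0 = Some 0) /\
  (forall k (s : 'I_S), (0 < k)%N -> Vt k H.+1 s = 0) /\
  (forall k t (s : 'I_S), (0 < k)%N -> (0 < t <= H)%N ->
     let Q := Qval S A H delta (cnt_n H pol st k) (cnt_l H pol st rw k)
                (cnt_m H pol st k) (Vt k t.+1) t (phip k t s) s in
     (forall a, Q a <= Q (pol k s t)) /\ Vt k t s = Q (pol k s t)) /\
  (forall k t (s s' : 'I_S), (0 < k)%N -> (0 < t <= H)%N ->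
     val s' = (val s).+1 -> phip k t s' = upd k t s) /\
  (* evolution of phi+ : from the last state of timestep t to timestep t-1 *)
  (forall k t (s s0 : 'I_S), (0 < k)%N -> (1 < t <= H)%N ->
     val s = S.-1 -> val s0 = 0%N -> phip k t.-1 s0 = upd k t s) /\
  (* evolution of phi+ : carried over to the next episode *)
  (forall k (s s0 : 'I_S), (0 < k)%N ->
     val s = S.-1 -> val s0 = 0%N -> phip k.+1 H s0 = upd k 1%N s).

(* "outside of the failure event": the concentration inequalities hold for
   all episodes k, timesteps t and pairs (s,a) *)
Definition no_failure {R : realType} (S A H : nat) (delta : R)
  (p0 : 'I_S -> R) (r : 'I_S -> 'I_A -> R) (p : 'I_S -> 'I_A -> 'I_S -> R)
  (pol : nat -> 'I_S -> nat -> 'I_A) (st : nat -> nat -> 'I_S)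
  (rw : nat -> nat -> R) : Prop :=
  forall k t (s : 'I_S) (a : 'I_A), (0 < k)%N -> (0 < t <= H)%N ->
    let n := cnt_n H pol st k s a in
    (1 / 2 * (\sum_(1 <= i < k) \sum_(1 <= h < H.+1) wocc p0 p pol i h s a)
       - H%:R * ln (9 * S%:R * A%:R / delta) <= n%:R) /\
    ((0 < n)%N ->
       let ph := phi_val S A H delta n in
       `|rhat H pol st rw k s a - r s a| <= ph /\
       `|\sum_(s' : 'I_S) (phat H pol st k s a s' - p s a s')
                           * Vstar H r p t.+1 s'|
          <= rng (Vstar H r p t.+1) * ph /\
       \sum_(s' : 'I_S) `|phat H pol st k s a s' - p s a s'|
          <= 4 * Num.sqrt S%:R * ph).

Definition nmin {S A : nat} (H : nat) (pol : nat -> 'I_S -> nat -> 'I_A)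
  (st : nat -> nat -> 'I_S) (k : nat) : nat :=
  let l := [seq cnt_n H pol st k s (pol k s t) | s <- enum 'I_S, t <- iota 1 H] in
  foldr minn (head 0%N l) l.

From HB Require Import structures.
From mathcomp Require Import all_boot all_order all_algebra.
From mathcomp Require Import reals sequences exp.
From mathcomp Require Import ring lra zify.
Import Order.TTheory GRing.Theory Num.Theory.
Local Open Scope ring_scope.

(* In a contextual bandit every pair (s, a) has the same next-state law mu, so
   in the optimistic value the empirical term p_hat^T V splits as
   (p_hat - mu)^T V + mu^T V, and mu^T V cancels when the values of two states at
   the same step are compared.  The clipped reward terms differ by at most 1; the
   rest is at most (H - t) (|p_hat(s1) - mu|_1 + |p_hat(s2) - mu|_1 + phi(s1)),
   because the next values and the bonus coefficient lie in [0, H - t].  On the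
   good event the L1 deviations are at most 4 sqrt(S) phi, and every width phi(n)
   with nmin <= n <= k H is at most 3 ln(e + SAHk/delta) / sqrt(nmin). *)

Section FoldrExtremum.
Context {disp : Order.disp_t} {T : orderType disp}.
Local Open Scope order_scope.

Lemma foldr_max_ge (x0 : T) l x : x \in x0 :: l -> x <= foldr Order.max x0 l.
Proof.
elim: l => [|y l IHl]; first by rewrite mem_seq1 => /eqP->.
move=> xin; rewrite /= le_max; have [->|nexy] := eqVneq x y; first by rewrite lexx.
by rewrite IHl ?orbT //; move: xin; rewrite !inE (negbTE nexy).
Qed.

Lemma foldr_max_mem (x0 : T) l : foldr Order.max x0 l \in x0 :: l.
Proof.
elim: l => [|y l IHl] /=; first exact: mem_head.
rewrite maxEle; case: ifP => _; last by rewrite !inE eqxx orbT.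
by move: IHl; rewrite !inE => /orP[->|->]; rewrite ?orbT.
Qed.

Lemma foldr_min_le (x0 : T) l x : x \in x0 :: l -> foldr Order.min x0 l <= x.
Proof.
elim: l => [|y l IHl]; first by rewrite mem_seq1 => /eqP->.
move=> xin; rewrite /= ge_min; have [->|nexy] := eqVneq x y; first by rewrite lexx.
by rewrite IHl ?orbT //; move: xin; rewrite !inE (negbTE nexy).
Qed.

Lemma foldr_min_mem (x0 : T) l : foldr Order.min x0 l \in x0 :: l.
Proof.
elim: l => [|y l IHl] /=; first exact: mem_head.
rewrite minEle; case: ifP => _; first by rewrite !inE eqxx orbT.
by move: IHl; rewrite !inE => /orP[->|->]; rewrite ?orbT.
Qed.

End FoldrExtremum.

Section ValueRange.
Context {R : realType} {T : finType}.
Implicit Types (f : T -> R).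

Lemma vmax_ge f x : f x <= vmax f.
Proof. by apply: foldr_max_ge; rewrite inE map_f ?mem_enum ?orbT. Qed.

Lemma vmin_le f x : vmin f <= f x.
Proof. by apply: foldr_min_le; rewrite inE map_f ?mem_enum ?orbT. Qed.

Lemma head_map_enum_mem f (x0 : T) :
  head 0 [seq f x | x <- enum T] \in [seq f x | x <- enum T].
Proof.
by case: (enum T) (mem_enum T x0) => [|y e] //= _; rewrite mem_head.
Qed.

Lemma vmax_mem f (x0 : T) : exists x, vmax f = f x.
Proof.
rewrite /vmax; set l := [seq f x | x <- enum T].
have := foldr_max_mem (head 0 l) l; rewrite inE => /predU1P[->|].
  by case/mapP: (head_map_enum_mem f x0) => x _ ->; exists x.
by move=> /mapP[x _ ->]; exists x.
Qed.

Lemma vmin_mem f (x0 : T) : exists x, vmin f = f x.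
Proof.
rewrite /vmin; set l := [seq f x | x <- enum T].
have := foldr_min_mem (head 0 l) l; rewrite inE => /predU1P[->|].
  by case/mapP: (head_map_enum_mem f x0) => x _ ->; exists x.
by move=> /mapP[x _ ->]; exists x.
Qed.

Lemma rng_ge0 f (x0 : T) : 0 <= rng f.
Proof. by rewrite subr_ge0 (le_trans (vmin_le f x0) (vmax_ge f x0)). Qed.

Lemma rng_le f (x0 : T) B : (forall x y, f x - f y <= B) -> rng f <= B.
Proof.
by rewrite /rng => fB; have [x ->] := vmax_mem f x0; have [y ->] := vmin_mem f x0.
Qed.

End ValueRange.

Lemma sum_mul_sub_le {R : numDomainType} {T : finType} (q mu V : T -> R) M :
  (forall s, 0 <= V s <= M) ->
  `|\sum_s q s * V s - \sum_s mu s * V s| <= M * \sum_s `|q s - mu s|.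
Proof.
move=> VM; rewrite -sumrB mulr_sumr (le_trans (ler_norm_sum _ _ _)) //.
apply: ler_sum => s _; have /andP[V0 VsM] := VM s.
by rewrite -mulrBl normrM (ger0_norm V0) mulrC; apply: ler_wpM2r.
Qed.

Lemma min_add_min_sub_le {R : realDomainType} (a1 a2 M x1 x2 D : R) :
  0 <= a2 -> x1 - x2 <= D -> 0 <= D ->
  (Num.min 1 a1 + Num.min M x1) - (Num.min 1 a2 + Num.min M x2) <= 1 + D.
Proof.
move=> a2_ge0 x12D D_ge0.
have : Num.min 1 a1 <= 1 by rewrite ge_min lexx.
have : 0 <= Num.min 1 a2 by rewrite le_min ler01.
have : Num.min M x1 <= M by rewrite ge_min lexx.
have : Num.min M x1 <= x1 by rewrite ge_min lexx orbT.
rewrite [Num.min M x2]minEle; case: ifP => _; lra.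
Qed.

Definition ext_ge0 {R : realType} (o : option R) : Prop :=
  if o is Some p then 0 <= p else True.

Lemma phip_upd_ge0 {R : realType} S H (pp ph : option R) :
  ext_ge0 pp -> ext_ge0 (phip_upd S H pp ph).
Proof. by case: pp ph => [p|] [x|] //= p0; rewrite le_max p0 orbT. Qed.

Section OptimisticQ.
Context {R : realType} (S A H : nat) (delta : R) (n : 'I_S -> 'I_A -> nat)
  (l : 'I_S -> 'I_A -> R) (m : 'I_S -> 'I_S -> 'I_A -> nat) (t : nat).
Hypothesis S_gt0 : (0 < S)%N.
Hypothesis l_ge0 : forall s a, 0 <= l s a.

Definition bonus_coef (Vn : 'I_S -> R) (pp : option R) : R :=
  if pp is Some p then Num.min (H - t)%:R (rng Vn + p) else (H - t)%:R.

Lemma bonus_coef_le Vn pp : bonus_coef Vn pp <= (H - t)%:R.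
Proof. by case: pp => [p|] //=; rewrite ge_min lexx. Qed.

Lemma bonus_coef_ge0 Vn pp : ext_ge0 pp -> 0 <= bonus_coef Vn pp.
Proof.
case: pp => [p|] /= p0; rewrite ?le_min ler0n //=.
exact: addr_ge0 (rng_ge0 Vn (Ordinal S_gt0)) p0.
Qed.

Lemma QvalE Vn pp s a : n s a != 0%N ->
  Qval S A H delta n l m Vn t pp s a =
    Num.min 1 (l s a / (n s a)%:R + phi_val S A H delta (n s a))
    + Num.min (vmax Vn) (\sum_s' (m s' s a)%:R / (n s a)%:R * Vn s'
                         + bonus_coef Vn pp * phi_val S A H delta (n s a)).
Proof. by move=> ns0; rewrite /Qval /phi_of (negbTE ns0). Qed.

Lemma Qval_bounds (Vn : 'I_S -> R) M pp s a :
  (forall s', 0 <= Vn s' <= M) -> ext_ge0 pp ->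
  0 <= Qval S A H delta n l m Vn t pp s a <= 1 + M.
Proof.
move=> VnM pp0; have [s0 vmaxE] := vmax_mem Vn (Ordinal S_gt0).
have /andP[vmax0 vmaxM] : 0 <= vmax Vn <= M by rewrite vmaxE.
have [/eqP ns0|ns0] := eqVneq (n s a) 0%N.
  by rewrite /Qval /phi_of ns0 /=; apply/andP; split; lra.
have n_gt0 : 0 < (n s a)%:R :> R by rewrite ltr0n lt0n.
rewrite QvalE //; set r1 := Num.min 1 _; set r2 := Num.min (vmax Vn) _.
have : 0 <= r1 <= 1.
  rewrite le_min ge_min lexx ler01 /= andbT.
  by rewrite addr_ge0 ?sqrtr_ge0 // divr_ge0 // ltW.
have : 0 <= r2 <= M.
  rewrite le_min ge_min vmaxM vmax0 /= andbT.
  rewrite addr_ge0 ?mulr_ge0 ?sqrtr_ge0 ?bonus_coef_ge0 //.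
  apply: sumr_ge0 => s' _; rewrite mulr_ge0 ?divr_ge0 ?ler0n //.
  by case/andP: (VnM s').
lra.
Qed.

Lemma Qval_sub_le (Vn mu : 'I_S -> R) pp1 pp2 s1 a1 s2 a2 :
  (forall s', 0 <= Vn s' <= (H - t)%:R) -> ext_ge0 pp2 ->
  n s1 a1 != 0%N -> n s2 a2 != 0%N ->
  Qval S A H delta n l m Vn t pp1 s1 a1 - Qval S A H delta n l m Vn t pp2 s2 a2
  <= 1 + (H - t)%:R * (\sum_s' `|(m s' s1 a1)%:R / (n s1 a1)%:R - mu s'|
                       + \sum_s' `|(m s' s2 a2)%:R / (n s2 a2)%:R - mu s'|
                       + phi_val S A H delta (n s1 a1)).
Proof.
move=> VnM pp2_ge0 ns1 ns2; rewrite !QvalE //.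
set phi1 := phi_val _ _ _ _ (n s1 a1); set phi2 := phi_val _ _ _ _ (n s2 a2).
have phi1_ge0 : 0 <= phi1 := sqrtr_ge0 _.
have phi2_ge0 : 0 <= phi2 := sqrtr_ge0 _.
have dev1 := sum_mul_sub_le (fun s' => (m s' s1 a1)%:R / (n s1 a1)%:R) mu _ _ VnM.
have dev2 := sum_mul_sub_le (fun s' => (m s' s2 a2)%:R / (n s2 a2)%:R) mu _ _ VnM.
move: dev1 dev2 => /=.
set Pmu := \sum_s' mu s' * Vn s'.
set P1 := \sum_s' (m s' s1 a1)%:R / _ * _; set P2 := \sum_s' (m s' s2 a2)%:R / _ * _.
set D1 := \sum_s' `|(m s' s1 a1)%:R / _ - _|.
set D2 := \sum_s' `|(m s' s2 a2)%:R / _ - _|.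
move=> dev1 dev2.
have norm1 : P1 - Pmu <= `|P1 - Pmu| := ler_norm _.
have norm2 : Pmu - P2 <= `|P2 - Pmu| by rewrite distrC ler_norm.
have bonus1 := ler_wpM2r phi1_ge0 (bonus_coef_le Vn pp1).
have bonus2 := mulr_ge0 (bonus_coef_ge0 Vn pp2 pp2_ge0) phi2_ge0.
have D_ge0 : 0 <= (H - t)%:R * (D1 + D2 + phi1).
  by rewrite mulr_ge0 ?addr_ge0 ?sumr_ge0.
apply: min_add_min_sub_le => //; last lra.
by rewrite addr_ge0 // divr_ge0.
Qed.

End OptimisticQ.

Section UbevsRun.
Context {R : realType} {S A H : nat} {delta : R}
  {pol : nat -> 'I_S -> nat -> 'I_A} {Vt : nat -> nat -> 'I_S -> R}
  {phip : nat -> nat -> 'I_S -> option R} {st : nat -> nat -> 'I_S}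
  {rw : nat -> nat -> R}.
Hypothesis S_gt0 : (0 < S)%N.
Hypothesis run : ubevs_run S A H delta pol Vt phip st rw.

Lemma cnt_l_ge0 k s a : 0 <= cnt_l H pol st rw k s a.
Proof.
have [rw01 _] := run.
apply: sumr_ge0 => i _; apply: sumr_ge0 => h _.
by case: ifP => // _; case/andP: (rw01 i h).
Qed.

Lemma phip_row_ge0 k t : (0 < k)%N -> (0 < t <= H)%N ->
  (forall s0 : 'I_S, val s0 = 0%N -> ext_ge0 (phip k t s0)) ->
  forall s, ext_ge0 (phip k t s).
Proof.
have [_ [_ [_ [_ [next_state _]]]]] := run.
move=> k_gt0 tH first_ge0 [i i_lt]; elim: i i_lt => [|i IHi] i_lt.
  exact: first_ge0.
rewrite (next_state k t (Ordinal (ltnW i_lt))) //.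
exact/phip_upd_ge0/IHi.
Qed.

Lemma phip_first_ge0 k t : (0 < k)%N -> (0 < t <= H)%N ->
  forall s0 : 'I_S, val s0 = 0%N -> ext_ge0 (phip k t s0).
Proof.
have [_ [init [_ [_ [_ [next_step next_episode]]]]]] := run.
have last_lt : (S.-1 < S)%N by rewrite ltn_predL.
elim: k t => [//|k IHk] t _ tH.
suff first_ge0 j : (j < H)%N ->
    forall s0 : 'I_S, val s0 = 0%N -> ext_ge0 (phip k.+1 (H - j) s0).
  have -> : t = (H - (H - t))%N by lia.
  by apply: first_ge0; lia.
elim: j => [|j IHj] jH s0 s00.
  rewrite subn0; case: k IHk => [|k] IHk; first by rewrite (init s0 s00) /=.
  rewrite (next_episode k.+1 (Ordinal last_lt) s0) //.
  by apply/phip_upd_ge0/phip_row_ge0 => //; apply: IHk => //; lia.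
rewrite subnS (next_step k.+1 (H - j)%N (Ordinal last_lt) s0) //; last by lia.
apply/phip_upd_ge0/phip_row_ge0 => //; first by lia.
by apply: IHj; lia.
Qed.

Lemma phip_ge0 k t s : (0 < k)%N -> (0 < t <= H)%N -> ext_ge0 (phip k t s).
Proof. by move=> k_gt0 tH; apply: phip_row_ge0 => //; apply: phip_first_ge0. Qed.

Lemma Vt_bounds k t : (0 < k)%N -> (0 < t <= H.+1)%N ->
  forall s, 0 <= Vt k t s <= (H.+1 - t)%:R.
Proof.
have [_ [_ [last_zero [greedy _]]]] := run.
move=> k_gt0 tH.
suff Vt_le j : (j <= H)%N -> forall s, 0 <= Vt k (H.+1 - j) s <= j%:R.
  by have := Vt_le (H.+1 - t)%N; rewrite subKn; [apply; lia | lia].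
elim: j => [|j IHj] jH s; first by rewrite subn0 last_zero ?lexx.
have tj : (0 < H - j <= H)%N by lia.
rewrite subSS (greedy k (H - j)%N s k_gt0 tj).2 -natr1 addrC.
apply: Qval_bounds => //.
- exact: cnt_l_ge0.
- by rewrite -subSn; [apply: IHj; lia | lia].
- exact: phip_ge0.
Qed.

Lemma Vt_sub_le k t s1 s2 (mu : 'I_S -> R) : (0 < k)%N -> (0 < t <= H)%N ->
  (0 < cnt_n H pol st k s1 (pol k s1 t))%N ->
  (0 < cnt_n H pol st k s2 (pol k s2 t))%N ->
  Vt k t s1 - Vt k t s2 <= 1 + (H - t)%:R *
    (\sum_s' `|phat H pol st k s1 (pol k s1 t) s' - mu s'|
     + \sum_s' `|phat H pol st k s2 (pol k s2 t) s' - mu s'|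
     + phi_val S A H delta (cnt_n H pol st k s1 (pol k s1 t))).
Proof.
have [_ [_ [_ [greedy _]]]] := run.
move=> k_gt0 tH ns1 ns2.
rewrite (greedy k t s1 k_gt0 tH).2 (greedy k t s2 k_gt0 tH).2.
apply: Qval_sub_le; rewrite -?lt0n //.
- exact: cnt_l_ge0.
- by move=> s'; rewrite -subSS; apply: Vt_bounds => //; lia.
- exact: phip_ge0.
Qed.

End UbevsRun.

Section ConfidenceWidth.
Context {R : realType}.

Lemma ln_expR1D_ge1 (y : R) : 0 <= y -> 1 <= ln (expR 1 + y).
Proof.
move=> y_ge0; have e_gt0 := expR_gt0 (1 : R).
by rewrite -[leLHS](expRK 1) ler_ln ?posrE; lra.
Qed.

Lemma ln_ln_max_le (x y : R) : x <= y -> 0 <= y ->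
  ln (ln (Num.max (expR 1) x)) <= ln (expR 1 + y).
Proof.
move=> xy y_ge0; have e_gt0 := expR_gt0 (1 : R).
set z := Num.max _ x; have ez : expR 1 <= z by rewrite le_max lexx.
have zy : z <= expR 1 + y by rewrite ge_max; apply/andP; split; lra.
have lnz_ge1 : 1 <= ln z by rewrite -[leLHS](expRK 1) ler_ln ?posrE //; lra.
have lnz_le : ln z <= ln (expR 1 + y) by rewrite ler_ln ?posrE; lra.
have : ln (ln z) < ln z by apply: ln_sublinear; lra.
lra.
Qed.

Lemma ln_le_4ln (c y : R) : 1 <= y -> 0 < c <= 27 * y ->
  ln c <= 4 * ln (expR 1 + y).
Proof.
move=> y_ge1 /andP[c_gt0 c_le].
have : 2 <= expR 1 :> R by have := expR_ge1Dx (1 : R); lra.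
set u := expR 1 + y => e_ge2; have u_ge3 : 3 <= u by rewrite /u; lra.
have u3 : 27 <= u ^+ 3 by rewrite !exprS expr0 mulr1; nra.
have u4 : 27 * y <= u ^+ 4.
  have : 0 <= u * (u ^+ 3 - 27) by rewrite mulr_ge0 ?subr_ge0 //; lra.
  have : y <= u by rewrite /u; lra.
  rewrite mulrBr -exprS; lra.
rewrite mulr_natl -lnXn; last by lra.
by rewrite ler_ln ?posrE ?exprn_gt0 //; lra.
Qed.

Lemma phi_val_le (S A H k n nm : nat) (delta : R) :
  (0 < S)%N -> (0 < A)%N -> (0 < H)%N -> (0 < k)%N -> 0 < delta -> delta <= 1 ->
  (0 < nm <= n)%N -> (n <= k * H)%N ->
  phi_val S A H delta n
    <= 3 * ln (expR 1 + (S * A * H * k)%:R / delta) / Num.sqrt nm%:R.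
Proof.
move=> S_gt0 A_gt0 H_gt0 k_gt0 delta_gt0 delta_le1 /andP[nm_gt0 nm_le] n_le.
set y := _ / delta; set X := ln (expR 1 + y).
have SAHk_ge1 : 1 <= (S * A * H * k)%:R :> R by rewrite ler1n !muln_gt0 S_gt0 A_gt0 H_gt0.
have SAHk_le : (S * A * H * k)%:R <= y.
  by rewrite /y ler_pdivlMr //; apply: ler_piMr; lra.
have X_ge1 : 1 <= X by apply: ln_expR1D_ge1; lra.
have lnln_le : ln (ln (Num.max (expR 1) n%:R)) <= X.
  apply: ln_ln_max_le; last by lra.
  apply: le_trans SAHk_le; rewrite ler_nat (leq_trans n_le) //.
  by rewrite [(k * H)%N]mulnC -mulnA leq_pmull // muln_gt0 S_gt0.
have lnconf_le : ln (27 * H%:R * S%:R * A%:R / delta) <= 4 * X.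
  apply: ln_le_4ln; first lra.
  rewrite divr_gt0 ?mulr_gt0 ?ltr0n //= /y mulrA ler_pM2r ?invr_gt0 //.
  by rewrite -!mulrA ler_pM2l // -!natrM ler_nat mulnC leq_pmulr.
have n_gt0 : 0 < n%:R :> R by rewrite ltr0n (leq_trans nm_gt0).
have nm_gt0' : 0 < nm%:R :> R by rewrite ltr0n.
rewrite /phi_val; set num := _ + _.
have : num / n%:R <= (3 * X) ^+ 2 / nm%:R.
  apply: (@le_trans _ _ ((3 * X) ^+ 2 / n%:R)).
    by rewrite ler_pM2r ?invr_gt0 // /num expr2; nra.
  rewrite ler_pM2l ?exprn_gt0 ?lef_pV2 ?posrE ?ler_nat //; lra.
move=> /ler_wsqrtr le_sqrt; apply: le_trans le_sqrt _.
by rewrite sqrtrM ?sqr_ge0 // sqrtr_sqr sqrtrV // ger0_norm //; lra.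
Qed.

End ConfidenceWidth.

Lemma nmin_le_cnt_n {S A : nat} H (pol : nat -> 'I_S -> nat -> 'I_A) st k s t :
  (0 < t <= H)%N -> (nmin H pol st k <= cnt_n H pol st k s (pol k s t))%N.
Proof.
move=> tH; rewrite /nmin -minEnat -leEnat.
apply: foldr_min_le; rewrite inE; apply/orP; right.
by apply: (allpairs_f (fun s t => cnt_n H pol st k s (pol k s t)));
  rewrite ?mem_enum // mem_iota; lia.
Qed.

Lemma cnt_n_le {S A : nat} H (pol : nat -> 'I_S -> nat -> 'I_A) st k s a :
  (cnt_n H pol st k s a <= k * H)%N.
Proof.
apply: (@leq_trans (\sum_(1 <= i < k) \sum_(1 <= h < H.+1) 1)%N).
  by do 2![apply: leq_sum => ? _]; case: (_ && _).
by rewrite !sum_nat_const_nat muln1 subSS subn0 leq_mul ?leq_subr.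
Qed.

Theorem lemma1 :
  exists C c : nat,
  forall (R : realType) (S A H : nat) (delta : R)
    (mu p0 : 'I_S -> R) (r : 'I_S -> 'I_A -> R) (p : 'I_S -> 'I_A -> 'I_S -> R)
    (pol : nat -> 'I_S -> nat -> 'I_A) (Vt : nat -> nat -> 'I_S -> R)
    (phip : nat -> nat -> 'I_S -> option R)
    (st : nat -> nat -> 'I_S) (rw : nat -> nat -> R),
    (0 < S)%N -> (0 < A)%N -> (0 < H)%N -> 0 < delta -> delta <= 1 ->
    is_distr mu -> is_distr p0 ->
    (forall s a s', p s a s' = mu s') ->
    (forall s a, 0 <= r s a <= 1) ->
    ubevs_run S A H delta pol Vt phip st rw ->
    no_failure S A H delta p0 r p pol st rw ->
    forall k t, (0 < k)%N -> (0 < t <= H)%N ->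
    (0 < nmin H pol st k)%N ->
    rng (Vt k t) <=
      1 + C%:R * ln (expR 1 + (S * A * H * k)%:R / delta) ^+ c
            * (H%:R * Num.sqrt S%:R / Num.sqrt (nmin H pol st k)%:R).
Proof.
exists 27%N, 1%N => R S A H delta mu p0 r p pol Vt phip st rw S_gt0 A_gt0 H_gt0
  delta_gt0 delta_le1 _ _ p_mu _ run no_fail k t k_gt0 tH nmin_gt0.
set X := ln _; set B := 3 * X / Num.sqrt (nmin H pol st k)%:R.
have n_gt0 s : (0 < cnt_n H pol st k s (pol k s t))%N.
  exact: leq_trans nmin_gt0 (nmin_le_cnt_n _ _ _ _ _ _ tH).
have phi_le s : phi_val S A H delta (cnt_n H pol st k s (pol k s t)) <= B.
  by apply: phi_val_le; rewrite ?nmin_gt0 ?nmin_le_cnt_n ?cnt_n_le.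
have dev_le s :
    \sum_s' `|phat H pol st k s (pol k s t) s' - mu s'| <= 4 * Num.sqrt S%:R * B.
  have [_ /(_ (n_gt0 s)) [_ [_ devL1]]] := no_fail k t s (pol k s t) k_gt0 tH.
  under eq_bigr do rewrite -(p_mu s (pol k s t)).
  apply: le_trans devL1 _; apply: ler_wpM2l (phi_le s).
  by rewrite mulr_ge0 ?sqrtr_ge0.
apply: (rng_le _ (Ordinal S_gt0)) => s1 s2.
apply: le_trans (Vt_sub_le S_gt0 run k t s1 s2 mu k_gt0 tH (n_gt0 s1) (n_gt0 s2)) _.
have sqrtS_ge1 : 1 <= Num.sqrt S%:R :> R by rewrite -[leLHS]sqrtr1 ler_wsqrtr // ler1n.
have B_ge0 : 0 <= B := le_trans (sqrtr_ge0 _) (phi_le s1).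
have -> : 27%:R * X ^+ 1 * (H%:R * Num.sqrt S%:R / Num.sqrt (nmin H pol st k)%:R)
    = H%:R * (9 * Num.sqrt S%:R * B) by rewrite /B expr1; ring.
rewrite lerD2l; apply: ler_pM;
  rewrite ?ler0n ?ler_nat ?leq_subr ?addr_ge0 ?sumr_ge0 ?sqrtr_ge0 //.
have := ler_peMl B_ge0 sqrtS_ge1; have := phi_le s1.
have := dev_le s1; have := dev_le s2; lra.
Qed.
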